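(* Let $r\geq 0$ be an integer and, for each integer $n\geq 0$, let $D_r(n)$ denote the number of $r$-derangements of $n+r$ elements (equivalently, $D_r(n)$ is defined by the exponential generating function $\sum_{n\geq 0} D_r(n)\frac{x^n}{n!}=\frac{x^r e^{-x}}{(1-x)^{r+1}}$; in particular $D_r(n)=0$ for $n<r$ and $D_r(n)=\sum_{j=r}^{n}(-1)^{n-j}\binom{j}{r}\frac{n!}{(n-j)!}$ for $n\geq r$). Then for every integer $n\geq r$, \[ \sum_{k=0}^{n}\binom{n}{k}\,D_r(k)=n!\binom{n}{r}. \]
   Context: An $r$-derangement of $n+r$ elements is a permutation of $\{1,\dots,n+r\}$ with no fixed points (every cycle in its cycle decomposition has length at least $2$) in which the first $r$ elements $1,\dots,r$ all lie in distinct cycles. $D_r(n)$ denotes the number of such permutations, and its exponential generating function is $\sum_{n\geq 0} D_r(n)\frac{x^n}{n!}=\frac{x^r e^{-x}}{(1-x)^{r+1}}$. For $r=0$, $D_0(n)$ is the usual number of derangements of $n$ elements. *)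

From mathcomp Require Import all_boot all_order all_fingroup.
Set Implicit Arguments. Unset Strict Implicit. Unset Printing Implicit Defensive.

(* Elements {1,...,n+r} are modelled by 'I_(n+r) = {0,...,n+r-1};
   the "first r elements" are those with value < r. *)

Definition rderangement (r m : nat) (s : {perm 'I_m}) : bool :=
  [forall x : 'I_m, s x != x] &&
  [forall i : 'I_m, forall j : 'I_m,
     ((i < r) && (j < r) && (i != j)) ==> (j \notin porbit s i)].

Definition D (r n : nat) : nat :=
  #|[set s : {perm 'I_(n + r)} | rderangement r s]|.

From mathcomp Require Import all_boot all_order all_fingroup.
From mathcomp Require Import zify.
Set Implicit Arguments. Unset Strict Implicit. Unset Printing Implicit Defensive.

(* Let P(r, m, t) count the permutations of m points in which the first r
   points lie in distinct cycles and none of the first t points is fixed, so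
   that D_r(k) = P(r, k + r, k + r).  Splitting on whether the point t >= r is
   fixed gives P(r, m + 1, t) = P(r, m + 1, t + 1) + P(r, m, t), and iterating
   this n times from t = r expands P(r, n + r, r) into the binomial sum of the
   theorem.  On the other hand the last point is either fixed, or it follows
   some y in its cycle and can be cut out; the result is then counted with y
   exempt from the fixed-point condition, which adds the permutations fixing y
   when y is one of the first r points.  Hence
   P(r, m + 1, r) = (m + 1) P(r, m, r) + r P(r - 1, m - 1, r - 1),
   whose solution is P(r, n + r, r) = n! C(n, r). *)

Section RestrictedPerms.
Variable T : finType.
Implicit Types (S F : pred T) (s u : {perm T}).

Definition fixfree_on F s : bool := [forall z, F z ==> (s z != z)].

Definition cycle_separated S s : bool :=
  [forall i, forall j, (S i && S j && (i != j)) ==> (j \notin porbit s i)].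

Definition restricted_perm S F : {set {perm T}} :=
  [set s | fixfree_on F s && cycle_separated S s].

Lemma eq_card_restricted_perm S S' F F' : S =1 S' -> F =1 F' ->
  #|restricted_perm S F| = #|restricted_perm S' F'|.
Proof.
move=> eqS eqF; apply: eq_card => s; rewrite !inE.
congr (_ && _); apply: eq_forallb => i; first by rewrite eqF.
by apply: eq_forallb => j; rewrite !eqS.
Qed.

Lemma fixfree_onU1 F i s :
  fixfree_on (predU1 i F) s = (s i != i) && fixfree_on F s.
Proof.
apply/forallP/andP => [fixfree|[sii /forallP fixfree] z].
  split; first by have /implyP := fixfree i; apply; rewrite !inE eqxx.
  apply/forallP => z; apply/implyP => Fz.
  by apply: (implyP (fixfree z)); apply/predU1P; right.
by rewrite !inE; apply/implyP => /predU1P [->|/(implyP (fixfree z))].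
Qed.

Lemma restricted_permU1 S F i :
  restricted_perm S (predU1 i F) =
  restricted_perm S F :\: [set t : {perm T} | t i == i].
Proof. by apply/setP => t; rewrite !inE fixfree_onU1 andbA. Qed.

Lemma porbit_iterP s a b :
  reflect (exists k, iter k s a = b) (b \in porbit s a).
Proof.
by apply: (iffP (porbitP _ _ _)) => [[k ->]|[k <-]]; exists k; rewrite permX.
Qed.

(* Inserting a fixed point x of u into the cycle of u through y, right after y. *)
Definition insert_after (x y : T) u : {perm T} := (u * tperm x (u y))%g.

Section Insertion.
Variables (x y : T) (u : {perm T}).
Hypothesis ux : u x = x.

Lemma insert_after_x : insert_after x y u x = u y.
Proof. by rewrite permM ux tpermL. Qed.

Lemma insert_after_y : insert_after x y u y = x.
Proof. by rewrite permM tpermR. Qed.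

Lemma insert_after_other z : z != x -> z != y -> insert_after x y u z = u z.
Proof.
move=> zx zy; rewrite permM tpermD //; last by rewrite (inj_eq perm_inj) eq_sym.
by rewrite -{1}ux (inj_eq perm_inj) eq_sym.
Qed.

Lemma porbit_insert_after a b : a != x -> b != x ->
  (b \in porbit (insert_after x y u) a) = (b \in porbit u a).
Proof.
move=> ax bx; set s := insert_after x y u.
have iter_ux k : iter k u a != x.
  apply: contra ax => /eqP E; apply/eqP; apply: (@perm_inj _ (u ^+ k)).
  by rewrite !permX E iter_fix.
apply/porbit_iterP/porbit_iterP => -[k Ek]; subst b.
- have [k' [-> | [sx _]]] : exists k', iter k s a = iter k' u a \/
      (iter k s a = x /\ iter k' u a = y).
    elim: k {bx} => [|k [k' [E|[E1 E2]]]]; first by exists 0; left.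
    + have [uy|uy] := eqVneq (iter k' u a) y.
        by exists k'; right; rewrite /= E uy insert_after_y.
      by exists k'.+1; left; rewrite /= E insert_after_other.
    + by exists k'.+1; left; rewrite /= E1 insert_after_x E2.
  + by exists k'.
  + by rewrite sx eqxx in bx.
- suff [k' ->] : exists k', iter k u a = iter k' s a by exists k'.
  elim: k {bx} => [|k [k' E]]; first by exists 0.
  have [uy|uy] := eqVneq (iter k u a) y.
    by exists k'.+2; rewrite /= -E uy insert_after_y insert_after_x.
  by exists k'.+1; rewrite /= -E insert_after_other.
Qed.

End Insertion.
End RestrictedPerms.

Section LiftPerm.
Variables (m : nat) (i : 'I_m.+1).
Implicit Types (S F : pred 'I_m.+1) (s : {perm 'I_m}) (t : {perm 'I_m.+1}).

Lemma forallb_lift (P : pred 'I_m.+1) :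
  [forall z, P z] = P i && [forall k, P (lift i k)].
Proof.
apply/forallP/andP => [allP | [Pi /forallP allP] z].
  by split=> //; apply/forallP.
by case: (unliftP i z) => [k|] ->.
Qed.

Lemma iter_lift_perm s k a :
  iter k (lift_perm i i s) (lift i a) = lift i (iter k s a).
Proof. by elim: k => //= k ->; rewrite lift_perm_lift. Qed.

Lemma porbit_lift_perm s a b :
  (lift i b \in porbit (lift_perm i i s) (lift i a)) = (b \in porbit s a).
Proof.
apply/porbit_iterP/porbit_iterP => -[k].
  by rewrite iter_lift_perm => /lift_inj <-; exists k.
by move=> <-; exists k; rewrite iter_lift_perm.
Qed.

Lemma porbit_lift_perm_id s a : (i \in porbit (lift_perm i i s) (lift i a)) = false.
Proof.
apply/porbit_iterP => -[k]; rewrite iter_lift_perm => /eqP.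
by rewrite eq_sym (negbTE (neq_lift _ _)).
Qed.

Lemma fixfree_on_lift_perm F s : ~~ F i ->
  fixfree_on F (lift_perm i i s) = fixfree_on (F \o lift i) s.
Proof.
move=> Fi; rewrite /fixfree_on forallb_lift (negbTE Fi) /=.
by apply: eq_forallb => k; rewrite lift_perm_lift (inj_eq lift_inj).
Qed.

Lemma cycle_separated_lift_perm S s :
  cycle_separated S (lift_perm i i s) = cycle_separated (S \o lift i) s.
Proof.
have porbit_id_lift b : (lift i b \in porbit (lift_perm i i s) i) = false.
  by rewrite porbit_sym porbit_lift_perm_id.
rewrite /cycle_separated forallb_lift !forallb_lift eqxx andbF /=.
rewrite [X in X && _](_ : _ = true); last first.
  by apply/forallP => k; rewrite porbit_id_lift implybT.
apply: eq_forallb => a; rewrite forallb_lift porbit_lift_perm_id implybT /=.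
by apply: eq_forallb => b; rewrite porbit_lift_perm (inj_eq lift_inj).
Qed.

Lemma lift_perm_inj : injective (@lift_perm m i i).
Proof.
move=> s1 s2 eq_s; apply/permP => k; apply: (@lift_inj _ i).
by rewrite -!(lift_perm_lift i i) eq_s.
Qed.

Lemma lift_permP t : t i = i -> exists s, t = lift_perm i i s.
Proof.
move=> ti.
have t_lift k : t (lift i k) != i.
  by apply: contraNneq (neq_lift i k) => E; apply/eqP/(@perm_inj _ t); rewrite ti E.
pose f k := odflt k (unlift i (t (lift i k))).
have fE k : lift i (f k) = t (lift i k).
  rewrite /f; case: (unliftP i (t (lift i k))) => [j ->|E] //.
  by move: (t_lift k); rewrite E eqxx.
have f_inj : injective f.
  by move=> a b eq_f; apply/(@lift_inj _ i)/(@perm_inj _ t); rewrite -!fE eq_f.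
exists (perm f_inj); apply/permP => z; case: (unliftP i z) => [k|] ->.
  by rewrite lift_perm_lift permE fE.
by rewrite lift_perm_id.
Qed.

Lemma card_restricted_perm_fix S F : ~~ F i ->
  #|restricted_perm S F :&: [set t : {perm _} | t i == i]| =
  #|restricted_perm (S \o lift i) (F \o lift i)|.
Proof.
move=> Fi; rewrite -(card_imset _ lift_perm_inj); apply: eq_card => t.
rewrite !inE; apply/andP/imsetP => [[restr_t /eqP ti] | [s]].
  have [s t_s] := lift_permP ti; exists s => //.
  by rewrite inE -fixfree_on_lift_perm // -cycle_separated_lift_perm -t_s.
rewrite inE -fixfree_on_lift_perm // -cycle_separated_lift_perm => restr_s ->.
by rewrite restr_s lift_perm_id eqxx.
Qed.

Definition lift_insert (p : {perm 'I_m} * 'I_m) : {perm 'I_m.+1} :=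
  insert_after i (lift i p.2) (lift_perm i i p.1).

Lemma lift_insert_id p : lift_insert p i = lift i (p.1 p.2).
Proof. by rewrite insert_after_x ?lift_perm_id ?lift_perm_lift. Qed.

Lemma lift_insert_lift p k : lift_insert p (lift i k) =
  if k == p.2 then i else lift i (p.1 k).
Proof.
have [-> | kp] := eqVneq k p.2; first exact: insert_after_y.
rewrite insert_after_other ?lift_perm_lift ?lift_perm_id ?(inj_eq lift_inj) //.
by rewrite eq_sym neq_lift.
Qed.

Lemma lift_insert_inj : injective lift_insert.
Proof.
move=> [s1 y1] [s2 y2] eq_ins.
have eq_y : y1 = y2.
  apply/(@lift_inj _ i)/(@perm_inj _ (lift_insert (s1, y1))).
  by rewrite lift_insert_lift eqxx eq_ins lift_insert_lift eqxx.
subst y2; congr (_, _); apply/permP => k; apply: (@lift_inj _ i).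
have [-> | ky] := eqVneq k y1.
  by move: (lift_insert_id (s1, y1)); rewrite eq_ins lift_insert_id.
move: (lift_insert_lift (s1, y1) k).
by rewrite eq_ins !lift_insert_lift /= (negbTE ky).
Qed.

Lemma lift_insertP t : t i != i -> exists p, t = lift_insert p.
Proof.
move=> ti; pose u := (t * tperm i (t i))%g.
have [s u_s] : exists s, u = lift_perm i i s.
  by apply: lift_permP; rewrite permM tpermR.
have [y ty] : exists y, (t^-1)%g i = lift i y.
  case: (unliftP i ((t^-1)%g i)) => [y ->|E]; first by exists y.
  by move: ti; rewrite -{1}E permKV eqxx.
exists (s, y); rewrite /lift_insert /insert_after /= -u_s -ty.
by rewrite permM permKV tpermL -mulgA tperm2 mulg1.
Qed.

Lemma fixfree_on_lift_insert F p : fixfree_on F (lift_insert p) =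
  fixfree_on (fun k => F (lift i k) && (k != p.2)) p.1.
Proof.
rewrite /fixfree_on forallb_lift lift_insert_id eq_sym neq_lift implybT /=.
apply: eq_forallb => k; rewrite lift_insert_lift.
have [-> | kp] := eqVneq k p.2; first by rewrite neq_lift andbF implybT.
by rewrite andbT (inj_eq lift_inj).
Qed.

Lemma cycle_separated_lift_insert S p : ~~ S i ->
  cycle_separated S (lift_insert p) = cycle_separated (S \o lift i) p.1.
Proof.
move=> Si; rewrite /cycle_separated forallb_lift (negbTE Si) /=.
rewrite [X in X && _](_ : _ = true) //; last by apply/forallP.
apply: eq_forallb => a; rewrite forallb_lift (negbTE Si) andbF /=.
apply: eq_forallb => b; rewrite (inj_eq lift_inj).
rewrite porbit_insert_after ?lift_perm_id ?porbit_lift_perm //.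
all: by rewrite eq_sym neq_lift.
Qed.

Lemma card_restricted_perm_nonfix S F : ~~ S i ->
  #|restricted_perm S F :\: [set t : {perm _} | t i == i]| =
  \sum_(y : 'I_m)
    #|restricted_perm (S \o lift i) (fun k => F (lift i k) && (k != y))|.
Proof.
move=> Si.
pose restr_y y := restricted_perm (S \o lift i) (fun k => F (lift i k) && (k != y)).
have -> : restricted_perm S F :\: [set t : {perm _} | t i == i] =
    lift_insert @: [set p | p.1 \in restr_y p.2].
  apply/setP => t; rewrite !inE; apply/andP/imsetP => [[ti restr_t] | [p]].
    have [p t_p] := lift_insertP ti; exists p => //.
    by rewrite !inE -fixfree_on_lift_insert -cycle_separated_lift_insert // -t_p.
  rewrite !inE -fixfree_on_lift_insert -cycle_separated_lift_insert //.
  move=> restr_p ->.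
  by rewrite lift_insert_id eq_sym neq_lift.
rewrite (card_imset _ lift_insert_inj) -sum1_card big_mkcond /=.
transitivity (\sum_s \sum_y (if s \in restr_y y then 1 else 0)).
  by rewrite pair_big; apply: eq_bigr => -[s y] _; rewrite inE.
rewrite exchange_big; apply: eq_bigr => y _.
by rewrite -sum1_card [RHS]big_mkcond; apply: eq_bigr => s _; rewrite !inE.
Qed.

End LiftPerm.

Lemma lift_ltn_low m (i : 'I_m.+1) (k : 'I_m) r :
  r <= i -> (lift i k < r) = (k < r).
Proof. by move=> ri; rewrite /= /bump; case: (leqP i k) => /=; lia. Qed.

Lemma lift_ltn_high m (i : 'I_m.+1) (k : 'I_m) r :
  i < r -> (lift i k < r) = (k < r.-1).
Proof. by move=> ir; rewrite /= /bump; case: (leqP i k) => /=; lia. Qed.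

Definition partialD (r m t : nat) : nat :=
  #|restricted_perm (fun z : 'I_m => z < r) (fun z : 'I_m => z < t)|.

Lemma D_partialD r k : D r k = partialD r (k + r) (k + r).
Proof.
rewrite /D /partialD; apply: eq_card => s; rewrite !inE /rderangement.
by congr (_ && _); apply: eq_forallb => z; rewrite ltn_ord.
Qed.

Lemma partialD_base r : partialD r r r = (r == 0).
Proof.
case: r => [|r].
  rewrite /partialD -[RHS]/(0`!) -card_Sn; apply: eq_card => s.
  by rewrite !inE; apply/andP; split; apply/forallP => -[].
apply/eqP; rewrite cards_eq0; apply/eqP/setP => s; rewrite !inE; apply/negbTE.
pose z : 'I_r.+1 := ord0; rewrite negb_and !negb_forall.
have [sz | sz] := eqVneq (s z) z; [apply/orP; left | apply/orP; right].
  by apply/existsP; exists z; rewrite sz eqxx.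
apply/existsP; exists z; rewrite negb_forall; apply/existsP; exists (s z).
by rewrite !ltn_ord eq_sym sz negbK; apply/porbit_iterP; exists 1.
Qed.

Lemma partialD_fixS r m t : r <= t -> t <= m ->
  partialD r m.+1 t = partialD r m.+1 t.+1 + partialD r m t.
Proof.
move=> rt tm; pose i : 'I_m.+1 := Ordinal (leq_ltn_trans tm (ltnSn m)).
rewrite /partialD -(cardsID [set s : {perm _} | s i == i]) addnC; congr (_ + _).
  rewrite -restricted_permU1; apply: eq_card_restricted_perm => // z.
  by rewrite /= ltnS [z <= t]leq_eqVlt -val_eqE.
rewrite card_restricted_perm_fix ?ltnn //; apply: eq_card_restricted_perm => k.
  exact: lift_ltn_low (leq_trans rt _).
exact: lift_ltn_low.
Qed.

Lemma partialD_release r m (y : 'I_m) : y < r ->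
  #|restricted_perm (fun z : 'I_m => z < r) (fun z => (z < r) && (z != y))| =
  partialD r m r + partialD r.-1 m.-1 r.-1.
Proof.
case: m y => [[]//|m] y yr.
rewrite /partialD -(cardsID [set s : {perm _} | s y == y]) addnC; congr (_ + _).
  rewrite -restricted_permU1; apply: eq_card_restricted_perm => // z /=.
  by have [->|] := eqVneq z y; rewrite ?yr ?andbT.
rewrite card_restricted_perm_fix ?eqxx ?andbF //.
apply: eq_card_restricted_perm => k; first exact: lift_ltn_high.
by rewrite [_ \o _]/comp lift_ltn_high // eq_sym neq_lift andbT.
Qed.

Lemma partialD_lastS r m : r <= m ->
  partialD r m.+1 r = m.+1 * partialD r m r + r * partialD r.-1 m.-1 r.-1.
Proof.
move=> rm; have max_high : ~~ ((ord_max : 'I_m.+1) < r) by rewrite -leqNgt.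
rewrite {1}/partialD -(cardsID [set s : {perm _} | s ord_max == ord_max]).
rewrite card_restricted_perm_fix // card_restricted_perm_nonfix //.
rewrite (eq_card_restricted_perm
    (S' := fun k : 'I_m => k < r) (F' := fun k => k < r));
  try by move=> k; exact: lift_ltn_low.
rewrite mulSn -addnA; congr (_ + _).
transitivity (\sum_(y < m)
  (partialD r m r + if y < r then partialD r.-1 m.-1 r.-1 else 0)).
  apply: eq_bigr => y _; case: ifPn => [yr | ].
    rewrite -(partialD_release yr); apply: eq_card_restricted_perm => k.
      exact: lift_ltn_low.
    by rewrite lift_ltn_low.
  rewrite -leqNgt addn0 => ry; apply: eq_card_restricted_perm => k.
    exact: lift_ltn_low.
  by rewrite lift_ltn_low //; case: eqP => [-> | _]; rewrite ?ltnNge ?ry ?andbT.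
rewrite big_split sum_nat_const card_ord -big_mkcond /=; congr (_ + _).
by rewrite -(big_ord_widen_cond _ xpredT (fun _ => _) rm) sum_nat_const card_ord.
Qed.

Lemma fact_bin_recS n r :
  (n + r.+1).+1 * 'C(n, r.+1) + r.+1 * 'C(n, r) = n.+1 * 'C(n.+1, r.+1).
Proof.
have pascal_diag : r.+1 * 'C(n.+1, r.+1) = n.+1 * 'C(n, r) by rewrite -mul_bin_diag.
rewrite binS mulnDr -pascal_diag binS; lia.
Qed.

Lemma partialD_closed n r : partialD r (n + r) r = n`! * 'C(n, r).
Proof.
elim: n r => [|n IHn] r; first by rewrite partialD_base; case: r.
rewrite addSn partialD_lastS ?leq_addl // IHn.
case: r => [|r]; first by rewrite !bin0 mul0n !addn0 !muln1.
rewrite addnS /= IHn factS -[RHS]mulnA [RHS]mulnCA -fact_bin_recS addnS mulnDr.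
by rewrite !(mulnCA n`!).
Qed.

Lemma sum_binS (f : nat -> nat) j :
  \sum_(i < j.+2) 'C(j.+1, i) * f i =
  \sum_(i < j.+1) 'C(j, i) * f i + \sum_(i < j.+1) 'C(j, i) * f i.+1.
Proof.
have sum_low : \sum_(i < j.+1) 'C(j, i) * f i =
    f 0 + \sum_(i < j.+1) 'C(j, i.+1) * f i.+1.
  rewrite big_ord_recl [in RHS]big_ord_recr /= (bin_small (ltnSn j)).
  by rewrite mul0n addn0 bin0 mul1n.
rewrite sum_low big_ord_recl bin0 mul1n -addnA -big_split; congr (_ + _).
by apply: eq_bigr => i _; rewrite binS mulnDl.
Qed.

Lemma partialD_binomial r n j : j <= n ->
  partialD r (n + r) (n + r - j) = \sum_(i < j.+1) 'C(j, i) * D r (n - i).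
Proof.
elim: j n => [|j IHj] n jn.
  by rewrite subn0 big_ord_recl big_ord0 bin0 mul1n addn0 subn0 D_partialD.
case: n jn => [//|n] jn.
rewrite (sum_binS (fun i => D r (n.+1 - i))) -IHj ?(ltnW jn) //.
under eq_bigr do rewrite subSS.
rewrite -IHj ?(ltnW jn) //.
have -> : n.+1 + r - j = (n + r - j).+1 by lia.
rewrite addSn subSS partialD_fixS //; lia.
Qed.

Theorem mainTheorem1 (r n : nat) (hrn : r <= n) :
  \sum_(k < n.+1) 'C(n, k) * D r k = n`! * 'C(n, r).
Proof.
rewrite -partialD_closed.
have := partialD_binomial r (leqnn n); rewrite addKn => ->.
rewrite (reindex_inj rev_ord_inj) /=; apply: eq_bigr => k _.
by rewrite subSS bin_sub // -ltnS.
Qed.
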